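(* Let $X$ be a Banach space, $\varphi:X\to\,]-\infty,+\infty]$ be quasiconvex, proper and lower semicontinuous, and $v^*\in X^*$. If $\varphi_{v^*}$ is not quasiconvex, then there exist $u,v,w\in X$ with $v\in\,]u,w[$ such that (i) $\varphi(w)\ge\varphi(v)>\varphi(u)$; (ii) $\varphi_{v^*}(v)>\max\{\varphi_{v^*}(u),\varphi_{v^*}(w)\}$; (iii) for every $\gamma>0$ there exists $v_\gamma\in\mathbb{B}_\gamma(v)\cap\,]v,w[$ with $\varphi_{v^*}(v)>\varphi_{v^*}(v_\gamma)$.
   Context: $]a,b[$ denotes the open segment $\{a+t(b-a):t\in\,]0,1[\}$; $\mathbb{B}_\gamma(v)$ is the open ball of radius $\gamma$ centered at $v$. For $v^*\in X^*$, $\varphi_{v^*}(x):=\varphi(x)+\langle v^*,x\rangle$. A function $f$ is quasiconvex if $f(\lambda x+(1-\lambda)y)\le\max\{f(x),f(y)\}$ for all $x,y\in X$, $\lambda\in\,]0,1[$. *)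

From Stdlib Require Import Reals Lra.
Open Scope R_scope.

Record Banach := {
  car :> Type;
  vzero : car;
  vadd : car -> car -> car;
  vopp : car -> car;
  vscal : R -> car -> car;
  vnorm : car -> R;
  vadd_assoc : forall x y z, vadd x (vadd y z) = vadd (vadd x y) z;
  vadd_comm : forall x y, vadd x y = vadd y x;
  vadd_zero : forall x, vadd x vzero = x;
  vadd_opp : forall x, vadd x (vopp x) = vzero;
  vscal_one : forall x, vscal 1 x = x;
  vscal_assoc : forall a b x, vscal a (vscal b x) = vscal (a * b) x;
  vscal_distr_r : forall a x y, vscal a (vadd x y) = vadd (vscal a x) (vscal a y);
  vscal_distr_l : forall a b x, vscal (a + b) x = vadd (vscal a x) (vscal b x);
  vnorm_nonneg : forall x, 0 <= vnorm x;
  vnorm_zero : forall x, vnorm x = 0 -> x = vzero;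
  vnorm_scal : forall a x, vnorm (vscal a x) = Rabs a * vnorm x;
  vnorm_triangle : forall x y, vnorm (vadd x y) <= vnorm x + vnorm y;
  complete : forall u : nat -> car,
    (forall eps, eps > 0 -> exists N, forall n m, (n >= N)%nat -> (m >= N)%nat ->
        vnorm (vadd (u n) (vopp (u m))) < eps) ->
    exists l, forall eps, eps > 0 -> exists N, forall n, (n >= N)%nat ->
        vnorm (vadd (u n) (vopp l)) < eps
}.

Arguments vzero {_}. Arguments vadd {_}. Arguments vopp {_}.
Arguments vscal {_}. Arguments vnorm {_}.

Definition vsub {X : Banach} (x y : X) : X := vadd x (vopp y).

Definition in_open_seg {X : Banach} (a b x : X) : Prop :=
  exists t, 0 < t < 1 /\ x = vadd a (vscal t (vsub b a)).

Definition in_ball {X : Banach} (v : X) (g : R) (x : X) : Prop :=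
  vnorm (vsub x v) < g.

Definition is_cont_linear {X : Banach} (f : X -> R) : Prop :=
  (forall x y, f (vadd x y) = f x + f y) /\
  (forall a x, f (vscal a x) = a * f x) /\
  (exists C, forall x, Rabs (f x) <= C * vnorm x).

Inductive ereal := Fin (r : R) | PInf.

Definition ele (a b : ereal) : Prop :=
  match a, b with
  | _, PInf => True
  | PInf, Fin _ => False
  | Fin x, Fin y => x <= y
  end.
Definition elt (a b : ereal) : Prop :=
  match a, b with
  | Fin _, PInf => True
  | PInf, _ => False
  | Fin x, Fin y => x < y
  end.
Definition emax (a b : ereal) : ereal :=
  match a, b with
  | PInf, _ | _, PInf => PInf
  | Fin x, Fin y => Fin (Rmax x y)
  end.
Definition eaddr (a : ereal) (r : R) : ereal :=
  match a with PInf => PInf | Fin x => Fin (x + r) end.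

Definition quasiconvex {X : Banach} (f : X -> ereal) : Prop :=
  forall x y (l : R), 0 < l < 1 ->
    ele (f (vadd (vscal l x) (vscal (1 - l) y))) (emax (f x) (f y)).

Definition proper {X : Banach} (f : X -> ereal) : Prop :=
  exists x, f x <> PInf.

Definition lsc {X : Banach} (f : X -> ereal) : Prop :=
  forall x (r : R), elt (Fin r) (f x) ->
    exists d, d > 0 /\ forall y, vnorm (vsub y x) < d -> elt (Fin r) (f y).

Definition tilt {X : Banach} (phi : X -> ereal) (vs : X -> R) : X -> ereal :=
  fun x => eaddr (phi x) (vs x).

From Stdlib Require Import Reals Lra Classical.
Open Scope R_scope.

(* Restrict everything to the line P t = t x + (1 - t) y through a pair x, y
   and a weight s0 witnessing that phi_{v*} is not quasiconvex, oriented so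
   that <v*, P t> = <v*, y> - c t with c >= 0.  Then f = phi o P is
   quasiconvex on [0,1] and f 0 < f s0, so f is nondecreasing on [s0,1].
   Let M = phi_{v*}(P s0) and let T be the supremum of the s such that
   phi_{v*} o P >= M on [s0,s].  Since f is nondecreasing, phi_{v*} o P can
   drop from the left by at most c times the distance, so it is still >= M at
   T, whereas values below M occur arbitrarily close to the right of T.  Take
   u = P 0, v = P T, w = P 1. *)

Definition quasiconvex_on (lo hi : R) (f : R -> R) : Prop :=
  forall a m b, lo <= a -> a < m -> m < b -> b <= hi -> f m <= Rmax (f a) (f b).

Lemma quasiconvex_on_nondecreasing (f : R -> R) (lo hi s0 : R) :
  quasiconvex_on lo hi f -> lo < s0 -> f lo < f s0 ->
  forall s s', s0 <= s -> s <= s' -> s' <= hi -> f s <= f s'.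
Proof.
  intros Hqc Hlo Hs0 s s' Hs Hss' Hs'.
  destruct (Rle_or_lt (f s) (f s')) as [Hle | Hlt]; [exact Hle | exfalso].
  assert (Hfs : f s <= f lo).
  { assert (s < s') by (destruct (Req_dec s s'); [subst; lra | lra]).
    pose proof (Hqc lo s s') as Hq.
    unfold Rmax in Hq; destruct (Rle_dec (f lo) (f s')); lra. }
  destruct (Req_dec s s0) as [-> | Hne]; [lra |].
  pose proof (Hqc lo s0 s) as Hq.
  unfold Rmax in Hq; destruct (Rle_dec (f lo) (f s)); lra.
Qed.

Lemma last_point_above (h : R -> R) (a b c M : R) :
  0 <= c -> a <= b -> M <= h a -> h b < M ->
  (forall r t, a <= r -> r <= t -> t <= b -> h r - c * (t - r) <= h t) ->
  exists T, a <= T < b /\ M <= h T /\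
    forall d, 0 < d -> exists s, T < s < b /\ s - T < d /\ h s < M.
Proof.
  intros Hc Hab Ha Hb Hslope.
  set (E := fun s => a <= s /\ forall r, a <= r <= s -> M <= h r).
  assert (HEb : forall s, E s -> s <= b).
  { intros s [Has Hs]. destruct (Rle_or_lt s b) as [Hle | Hlt]; [exact Hle |].
    pose proof (Hs b ltac:(lra)). lra. }
  assert (HEa : E a) by (split; [lra | intros r Hr; replace r with a by lra; exact Ha]).
  destruct (completeness E) as [T [HTub HTlub]].
  { exists b. exact HEb. }
  { exists a. exact HEa. }
  assert (HaT : a <= T) by (apply HTub; exact HEa).
  assert (HTb : T <= b) by (apply HTlub; exact HEb).
  assert (Hbelow : forall r, a <= r < T -> M <= h r).
  { intros r Hr. destruct (Rle_lt_dec M (h r)) as [Hle | Hlt]; [exact Hle | exfalso].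
    assert (T <= r); [| lra].
    apply HTlub. intros s [Has Hs].
    destruct (Rle_lt_dec s r) as [Hle | Hsr]; [exact Hle |].
    pose proof (Hs r ltac:(lra)). lra. }
  assert (HT : M <= h T).
  { destruct (Req_dec T a) as [-> | HTa]; [exact Ha |].
    destruct (Rle_lt_dec M (h T)) as [Hle | Hlt]; [exact Hle | exfalso].
    set (d := (M - h T) / (2 * c + 2)).
    assert (Hd : d * (2 * c + 2) = M - h T) by (unfold d; field; lra).
    assert (Hdpos : 0 < d) by (unfold d; apply Rdiv_lt_0_compat; lra).
    set (r := Rmax a (T - d)).
    assert (Hr1 : a <= r) by apply Rmax_l.
    assert (Hr2 : T - d <= r) by apply Rmax_r.
    assert (Hr3 : r < T) by (apply Rmax_lub_lt; lra).
    pose proof (Hbelow r ltac:(lra)).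
    pose proof (Hslope r T Hr1 ltac:(lra) HTb).
    assert (c * (T - r) <= c * d) by (apply Rmult_le_compat_l; lra).
    lra. }
  assert (HTb' : T < b) by (destruct (Req_dec T b) as [-> | Hne]; lra).
  exists T. split; [lra | split; [exact HT |]].
  intros d Hd. apply NNPP. intros Hnone.
  set (s' := Rmin (T + d / 2) ((T + b) / 2)).
  assert (Hs'1 : s' <= T + d / 2) by apply Rmin_l.
  assert (Hs'2 : s' <= (T + b) / 2) by apply Rmin_r.
  assert (Hs'3 : T < s') by (apply Rmin_glb_lt; lra).
  assert (HEs' : E s').
  { split; [lra |]. intros r [Har Hrs'].
    destruct (Rlt_or_le r T) as [HrT | HTr]; [apply Hbelow; lra |].
    destruct (Req_dec r T) as [-> | Hne]; [exact HT |].
    destruct (Rle_lt_dec M (h r)) as [Hle | Hlt]; [exact Hle |].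
    exfalso. apply Hnone. exists r. repeat split; lra. }
  pose proof (HTub s' HEs'). lra.
Qed.

Lemma tilted_quasiconvex_1d (f : R -> R) (c s0 : R) :
  quasiconvex_on 0 1 f -> 0 <= c -> 0 < s0 < 1 ->
  Rmax (f 0) (f 1 - c) < f s0 - c * s0 ->
  exists T, s0 <= T < 1 /\ f 0 < f T <= f 1 /\
    Rmax (f 0) (f 1 - c) < f T - c * T /\
    forall d, 0 < d -> exists s, T < s < 1 /\ s - T < d /\ f s - c * s < f T - c * T.
Proof.
  intros Hqc Hc Hs0 Hmax.
  pose proof (Rmax_l (f 0) (f 1 - c)). pose proof (Rmax_r (f 0) (f 1 - c)).
  assert (Hf0 : f 0 < f s0) by (assert (0 <= c * s0) by (apply Rmult_le_pos; lra); lra).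
  pose proof (quasiconvex_on_nondecreasing f 0 1 s0 Hqc ltac:(lra) Hf0) as Hmono.
  destruct (last_point_above (fun s => f s - c * s) s0 1 c (f s0 - c * s0))
    as [T [HT [HMT Hright]]]; try lra.
  { intros r t Hr Hrt Ht. pose proof (Hmono r t Hr Hrt Ht). lra. }
  pose proof (Hmono s0 T ltac:(lra) ltac:(lra) ltac:(lra)).
  pose proof (Hmono T 1 ltac:(lra) ltac:(lra) ltac:(lra)).
  exists T. repeat split; try lra.
  intros d Hd. destruct (Hright d Hd) as [s [Hs [Hsd Hhs]]].
  exists s. simpl in Hhs. repeat split; lra.
Qed.

Section Lines.

Variable X : Banach.

Lemma vadd0l (x : X) : vadd vzero x = x.
Proof. rewrite vadd_comm, vadd_zero. reflexivity. Qed.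

Lemma vscal0 (x : X) : vscal 0 x = vzero.
Proof.
  assert (Hdup : vscal 0 x = vadd (vscal 0 x) (vscal 0 x)).
  { rewrite <- vscal_distr_l. f_equal. ring. }
  rewrite <- (vadd_opp X (vscal 0 x)). rewrite Hdup at 2.
  rewrite <- vadd_assoc, vadd_opp, vadd_zero. reflexivity.
Qed.

Lemma vopp_unique (p q : X) : vadd p q = vzero -> q = vopp p.
Proof.
  intros H.
  rewrite <- (vadd_zero X q), <- (vadd_opp X p), vadd_assoc, (vadd_comm X q p), H.
  apply vadd0l.
Qed.

Lemma vopp_scalN1 (x : X) : vopp x = vscal (-1) x.
Proof.
  symmetry. apply vopp_unique.
  rewrite <- (vscal_one X x) at 1. rewrite <- vscal_distr_l.
  replace (1 + -1) with 0 by ring. apply vscal0.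
Qed.

Lemma vadd_add4 (a b c d : X) : vadd (vadd a b) (vadd c d) = vadd (vadd a c) (vadd b d).
Proof. rewrite <- !vadd_assoc. f_equal. rewrite !vadd_assoc. f_equal. apply vadd_comm. Qed.

Definition lincomb (x y : X) (a b : R) : X := vadd (vscal a x) (vscal b y).

Lemma lincomb_add (x y : X) a b a' b' :
  vadd (lincomb x y a b) (lincomb x y a' b') = lincomb x y (a + a') (b + b').
Proof. unfold lincomb. rewrite vadd_add4, !vscal_distr_l. reflexivity. Qed.

Lemma lincomb_scal (x y : X) k a b :
  vscal k (lincomb x y a b) = lincomb x y (k * a) (k * b).
Proof. unfold lincomb. rewrite vscal_distr_r, !vscal_assoc. reflexivity. Qed.

Lemma lincomb_sub (x y : X) a b a' b' :
  vsub (lincomb x y a b) (lincomb x y a' b') = lincomb x y (a - a') (b - b').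
Proof.
  unfold vsub. rewrite vopp_scalN1, lincomb_scal, lincomb_add. f_equal; ring.
Qed.

Lemma lincomb_1N1 (x y : X) : lincomb x y 1 (-1) = vsub x y.
Proof. unfold lincomb, vsub. rewrite vscal_one, vopp_scalN1. reflexivity. Qed.

Lemma linear_lincomb (vs : X -> R) (x y : X) a b :
  is_cont_linear vs -> vs (lincomb x y a b) = a * vs x + b * vs y.
Proof. intros [Hadd [Hscal _]]. unfold lincomb. rewrite Hadd, !Hscal. reflexivity. Qed.

Definition line (x y : X) (t : R) : X := lincomb x y t (1 - t).

Lemma line0 (x y : X) : line x y 0 = y.
Proof.
  unfold line, lincomb. replace (1 - 0) with 1 by ring.
  rewrite vscal0, vadd0l. apply vscal_one.
Qed.

Lemma line1 (x y : X) : line x y 1 = x.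
Proof.
  unfold line, lincomb. replace (1 - 1) with 0 by ring.
  rewrite vscal0, vadd_zero. apply vscal_one.
Qed.

Lemma line_comb (x y : X) l s1 s2 :
  line x y (l * s1 + (1 - l) * s2) = vadd (vscal l (line x y s1)) (vscal (1 - l) (line x y s2)).
Proof. unfold line. rewrite !lincomb_scal, lincomb_add. f_equal; ring. Qed.

Lemma line_sub (x y : X) s t : vsub (line x y s) (line x y t) = vscal (s - t) (vsub x y).
Proof. unfold line. rewrite lincomb_sub, <- lincomb_1N1, lincomb_scal. f_equal; ring. Qed.

Lemma line_dist (x y : X) s t :
  vnorm (vsub (line x y s) (line x y t)) = Rabs (s - t) * vnorm (vsub x y).
Proof. rewrite line_sub. apply vnorm_scal. Qed.

Lemma line_open_seg (x y : X) a b tau :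
  0 < tau < 1 -> in_open_seg (line x y a) (line x y b) (line x y (a + tau * (b - a))).
Proof.
  intros Htau. exists tau. split; [exact Htau |].
  rewrite line_sub, vscal_assoc. unfold line.
  rewrite <- lincomb_1N1, lincomb_scal, lincomb_add. f_equal; ring.
Qed.

End Lines.

Arguments lincomb {X}. Arguments line {X}.

Definition fin_part (e : ereal) : R := match e with Fin r => r | PInf => 0 end.

Lemma ele_Fin a r : ele a (Fin r) -> a = Fin (fin_part a).
Proof. destruct a; simpl; tauto. Qed.

Lemma elt_emax_Fin a b e : elt (emax a b) e -> a = Fin (fin_part a) /\ b = Fin (fin_part b).
Proof. destruct a, b, e; simpl; tauto. Qed.

Lemma not_ele a b : ~ ele a b -> elt b a.
Proof. destruct a, b; simpl; intros; try tauto; lra. Qed.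

Lemma emax_comm a b : emax a b = emax b a.
Proof. destruct a, b; simpl; try reflexivity. rewrite Rmax_comm. reflexivity. Qed.

Lemma tilt_Fin {X : Banach} (phi : X -> ereal) vs x :
  tilt phi vs x = Fin (fin_part (tilt phi vs x)) -> phi x = Fin (fin_part (phi x)).
Proof. unfold tilt. destruct (phi x); simpl; congruence. Qed.

Definition tilt_witness {X : Banach} (phi : X -> ereal) (vs : X -> R) (u v w : X) : Prop :=
  in_open_seg u w v /\
  (ele (phi v) (phi w) /\ elt (phi u) (phi v)) /\
  elt (emax (tilt phi vs u) (tilt phi vs w)) (tilt phi vs v) /\
  (forall g, g > 0 -> exists vg, in_ball v g vg /\ in_open_seg v w vg /\
      elt (tilt phi vs vg) (tilt phi vs v)).

Section Witness.

Variables (X : Banach) (phi : X -> ereal) (vs : X -> R) (x y : X) (s0 : R).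
Hypotheses (Hqc : quasiconvex phi) (Hlin : is_cont_linear vs) (Hvs : vs x <= vs y)
  (Hs0 : 0 < s0 < 1)
  (Hbad : elt (emax (tilt phi vs (line x y 0)) (tilt phi vs (line x y 1)))
              (tilt phi vs (line x y s0))).

Let f (s : R) : R := fin_part (phi (line x y s)).
Let c : R := vs y - vs x.

Lemma phi_line_Fin s : 0 <= s <= 1 -> phi (line x y s) = Fin (f s).
Proof.
  destruct (elt_emax_Fin _ _ _ Hbad) as [H0 H1].
  apply tilt_Fin in H0. apply tilt_Fin in H1.
  intros Hs. unfold f.
  destruct (Req_dec s 0) as [-> | Hne0]; [exact H0 |].
  destruct (Req_dec s 1) as [-> | Hne1]; [exact H1 |].
  pose proof (Hqc (line x y 1) (line x y 0) s ltac:(lra)) as Hq.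
  rewrite <- line_comb in Hq. replace (s * 1 + (1 - s) * 0) with s in Hq by ring.
  rewrite H0, H1 in Hq. exact (ele_Fin _ _ Hq).
Qed.

Lemma tilt_line_Fin s : 0 <= s <= 1 -> tilt phi vs (line x y s) = Fin (f s - c * s + vs y).
Proof.
  intros Hs. unfold tilt. rewrite phi_line_Fin by exact Hs.
  unfold line. rewrite linear_lincomb by exact Hlin. simpl. unfold c. f_equal. ring.
Qed.

Lemma quasiconvex_on_line : quasiconvex_on 0 1 f.
Proof.
  intros a m b Ha Ham Hmb Hb.
  set (l := (b - m) / (b - a)).
  assert (Hl : 0 < l < 1).
  { unfold l. split; [apply Rdiv_lt_0_compat; lra |].
    apply (Rmult_lt_reg_r (b - a)); [lra |]. field_simplify; lra. }
  pose proof (Hqc (line x y a) (line x y b) l Hl) as Hq.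
  rewrite <- line_comb in Hq. replace (l * a + (1 - l) * b) with m in Hq by (unfold l; field; lra).
  rewrite !phi_line_Fin in Hq by lra. exact Hq.
Qed.

Lemma tilt_witness_on_line : exists u v w, tilt_witness phi vs u v w.
Proof.
  destruct (tilted_quasiconvex_1d f c s0 quasiconvex_on_line ltac:(unfold c; lra) Hs0)
    as [T [HT [[Hf0 Hf1] [Hmax Hright]]]].
  { pose proof Hbad as Hbad'.
    rewrite !tilt_line_Fin in Hbad' by lra. simpl in Hbad'.
    pose proof (Rmax_l (f 0 - c * 0 + vs y) (f 1 - c * 1 + vs y)).
    pose proof (Rmax_r (f 0 - c * 0 + vs y) (f 1 - c * 1 + vs y)).
    apply Rmax_lub_lt; lra. }
  exists (line x y 0), (line x y T), (line x y 1).
  split; [| split; [| split]].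
  - pose proof (line_open_seg X x y 0 1 T ltac:(lra)) as Hseg.
    replace (0 + T * (1 - 0)) with T in Hseg by ring. exact Hseg.
  - rewrite !phi_line_Fin by lra. simpl. lra.
  - rewrite !tilt_line_Fin by lra. simpl.
    pose proof (Rmax_l (f 0) (f 1 - c)). pose proof (Rmax_r (f 0) (f 1 - c)).
    apply Rmax_lub_lt; lra.
  - intros g Hg.
    set (N := vnorm (vsub x y)).
    assert (HN : 0 <= N) by apply vnorm_nonneg.
    destruct (Hright (g / (N + 1)) ltac:(apply Rdiv_lt_0_compat; lra))
      as [s [Hs [Hsd Hdec]]].
    exists (line x y s). split; [| split].
    + unfold in_ball. rewrite line_dist. fold N. rewrite Rabs_right by lra.
      apply (Rmult_lt_compat_r (N + 1)) in Hsd; [| lra].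
      replace (g / (N + 1) * (N + 1)) with g in Hsd by (field; lra). nra.
    + set (tau := (s - T) / (1 - T)).
      replace s with (T + tau * (1 - T)) by (unfold tau; field; lra).
      apply line_open_seg. unfold tau. split; [apply Rdiv_lt_0_compat; lra |].
      apply (Rmult_lt_reg_r (1 - T)); [lra |]. field_simplify; lra.
    + rewrite !tilt_line_Fin by lra. simpl. lra.
Qed.

End Witness.

Theorem lemma3p3 (X : Banach) (phi : X -> ereal) (vs : X -> R) :
  quasiconvex phi -> proper phi -> lsc phi -> is_cont_linear vs ->
  ~ quasiconvex (tilt phi vs) ->
  exists u v w : X,
    in_open_seg u w v /\
    (ele (phi v) (phi w) /\ elt (phi u) (phi v)) /\
    elt (emax (tilt phi vs u) (tilt phi vs w)) (tilt phi vs v) /\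
    (forall g, g > 0 -> exists vg, in_ball v g vg /\ in_open_seg v w vg /\
        elt (tilt phi vs vg) (tilt phi vs v)).
Proof.
  intros Hqc _ _ Hlin Hnqc.
  apply not_all_ex_not in Hnqc as [x Hnqc].
  apply not_all_ex_not in Hnqc as [y Hnqc].
  apply not_all_ex_not in Hnqc as [l Hnqc].
  apply imply_to_and in Hnqc as [Hl Hbad]. apply not_ele in Hbad.
  change (vadd (vscal l x) (vscal (1 - l) y)) with (line x y l) in Hbad.
  destruct (Rle_or_lt (vs x) (vs y)) as [Hxy | Hyx].
  - apply (tilt_witness_on_line X phi vs x y l); try assumption.
    rewrite line0, line1, emax_comm. exact Hbad.
  - apply (tilt_witness_on_line X phi vs y x (1 - l)); try (assumption || lra).
    rewrite line0, line1.
    replace (line y x (1 - l)) with (line x y l)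
      by (unfold line, lincomb; rewrite vadd_comm; f_equal; f_equal; ring).
    exact Hbad.
Qed.
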